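(* The DODOSP restricted to instances with $r_l^d=0$ and $r_u^d=N$ for each day $d$ can be decided in time polynomial in $D$.
   Context: An instance of the Days On Days Off Scheduling Problem (DODOSP) consists of integers $D\ge 1$ (days), $N\ge 1$ (workers), bounds $l_w,u_w,l_o,u_o,U_w,U_o\in\mathbb{N}$, and for each day $d\in\{1,\dots,D\}$ integers $0\le r_l^d\le r_u^d\le N$. A schedule is a map $f:\{n_1,\dots,n_N\}\times\{1,\dots,D\}\to\{\mathrm{ON},\mathrm{OFF}\}$ (not cyclic). A work period (resp. off period) of a worker is an inclusion-wise maximal set of consecutive days on which the worker is ON (resp. OFF). A schedule is feasible if on every day $d$ the number of workers that are ON lies in $[r_l^d,r_u^d]$, every work period has length between $l_w$ and $u_w$, every off period has length between $l_o$ and $u_o$, every worker is ON on at most $U_w$ days and OFF on at most $U_o$ days. The decision problem asks whether a feasible schedule exists. *)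

From mathcomp Require Import all_boot.
Set Implicit Arguments. Unset Strict Implicit. Unset Printing Implicit Defensive.

(* Days are indexed 0 .. D-1 (day d of the paper is index d-1), workers *)
(* 0 .. N-1.  A schedule is  f : nat -> nat -> bool  where  f n d = true *)
(* means worker n is ON on day d; only n < N, d < D matter.              *)

Definition is_period (D : nat) (s : nat -> bool) (b : bool) (i j : nat) : Prop :=
  [/\ i < j <= D,
      (forall d, i <= d < j -> s d = b),
      (i = 0 \/ s i.-1 <> b)
    & (j = D \/ s j <> b)].

(* Feasibility of a DODOSP instance; rl d / ru d are the bounds r_l^{d+1}, r_u^{d+1}. *)
Definition dodosp_feasible (D N lw uw lo uo Uw Uo : nat) (rl ru : nat -> nat) : Prop :=
  exists f : nat -> nat -> bool,
    [/\ (forall d, d < D -> rl d <= \sum_(n < N) (f n d : nat) <= ru d),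
        (forall n i j, n < N -> is_period D (f n) true i j -> lw <= j - i <= uw),
        (forall n i j, n < N -> is_period D (f n) false i j -> lo <= j - i <= uo),
        (forall n, n < N -> \sum_(d < D) (f n d : nat) <= Uw)
      & (forall n, n < N -> \sum_(d < D) (~~ f n d : nat) <= Uo)].

(* Model of computation: a unit-cost register machine (RAM without      *)
(* indirect addressing) over unbounded naturals; each executed           *)
(* instruction costs one step.                                           *)

Inductive instr :=
| IConst of nat & nat
| IAdd of nat & nat & nat
| ISub of nat & nat & nat      (* ISub r a b   : R[r] := R[a] - R[b] (trunc.)  *)
| IJle of nat & nat & nat
| IHalt.

Definition program := seq instr.

Record config := Config { pc : nat; regs : nat -> nat }.

Definition upd (R : nat -> nat) (r v : nat) : nat -> nat :=
  fun x => if x == r then v else R x.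

(* One step; None means the machine has halted (IHalt, or pc out of range). *)
Definition step (P : program) (c : config) : option config :=
  let R := regs c in
  match nth IHalt P (pc c) with
  | IConst r v => Some (Config (pc c).+1 (upd R r v))
  | IAdd r a b => Some (Config (pc c).+1 (upd R r (R a + R b)))
  | ISub r a b => Some (Config (pc c).+1 (upd R r (R a - R b)))
  | IJle a b l => Some (Config (if R a <= R b then l else (pc c).+1) R)
  | IHalt => None
  end.

(* exec P t c = Some c' iff the machine started in c halts after at most
   t steps, in the halted configuration c'. *)
Fixpoint exec (P : program) (t : nat) (c : config) : option config :=
  match step P c with
  | None => Some c
  | Some c' => match t with 0 => None | t'.+1 => exec P t' c' end
  end.

Definition init (input : seq nat) : config := Config 0 (fun r => nth 0 input r).

From mathcomp Require Import all_boot zify.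
Set Implicit Arguments. Unset Strict Implicit. Unset Printing Implicit Defensive.

(* With r_l = 0 and r_u = N the workers do not interact: an instance is feasible
   iff a single row of D days is, and then every worker may follow that row.  A row
   alternates work and off periods; if it has a work periods of total length W and
   o off periods of total length O (so |a - o| <= 1), then W + O = D, W <= U_w,
   O <= U_o, a max(l_w,1) <= W <= a u_w and o max(l_o,1) <= O <= o u_o, and
   conversely such numbers always come from a row.  With m = min(a, o) <= D,
   feasibility thus asks whether for some m <= D one of the shapes
   (a, o) = (m, m), (m+1, m), (m, m+1) admits a solution (W, O) of these box
   constraints.  Solvability of a box amounts to nine linear inequalities, which a
   straight-line register program tests with truncated subtractions; looping over
   m gives a decider running in 84 D + 97 steps. *)

Lemma sum_const_suffix (F : nat -> nat) i p x : i <= p ->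
    (forall d, i <= d < p -> F d = x) ->
  \sum_(d < p) F d = \sum_(d < i) F d + (p - i) * x.
Proof.
move=> le_ip Fx; rewrite -!(big_mkord xpredT) (big_cat_nat (leq0n i) le_ip) /=.
by rewrite (eq_big_nat _ _ Fx) sum_nat_const_nat.
Qed.

Lemma split_last_summand k l u W : k.+1 * l <= W <= k.+1 * u ->
  exists W1 L, [/\ W = W1 + L, k * l <= W1 <= k * u & l <= L <= u].
Proof.
move=> /andP[lW Wu].
have le_lu : l <= u by rewrite -(leq_pmul2l (ltn0Sn k)) (leq_trans lW).
have := leq_mul (leqnn k) le_lu; rewrite !mulSnr in lW Wu *.
by exists (W - minn u (W - k * l)), (minn u (W - k * l)); split; lia.
Qed.

Definition extend_row (s : nat -> bool) p c d := if d < p then s d else c.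

Lemma sum_extend_row (F : bool -> nat) s p c L :
  \sum_(d < p + L) F (extend_row s p c d) = \sum_(d < p) F (s d) + L * F c.
Proof.
rewrite (@sum_const_suffix (fun d => F (extend_row s p c d)) p _ (F c)) ?leq_addr //.
  by rewrite addKn; congr (_ + _); apply: eq_bigr => d _; rewrite /extend_row ltn_ord.
by move=> d /andP[le_pd _]; rewrite /extend_row ltnNge le_pd.
Qed.

Lemma is_period_extend_row s p c L b i j : 0 < L -> (p = 0 \/ s p.-1 = ~~ c) ->
    is_period (p + L) (extend_row s p c) b i j ->
  is_period p s b i j \/ [/\ b = c, i = p & j = p + L].
Proof.
rewrite /extend_row => L_gt0 p_edge [/andP[lt_ij le_jD] const i_edge j_edge].
have [le_jp | lt_pj] := leqP j p.
  left; split; first by rewrite lt_ij le_jp.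
  - by move=> d d_ij; rewrite -(const d d_ij) ifT //; lia.
  - by case: i_edge => [|i_edge]; [left | right; rewrite ifT in i_edge; lia].
  case: j_edge => [|j_edge]; first lia.
  by have [lt_jp|ge_jp] := ltnP j p; [right; rewrite ifT in j_edge | left; lia].
have bc : b = c by rewrite -(const j.-1) ?ifF //; lia.
have le_pi : p <= i.
  rewrite leqNgt; apply/negP => lt_ip; have := const p.-1; rewrite ifT; last lia.
  by case: p_edge => [|->]; [lia | rewrite bc; case: (c); lia].
right; split => //.
  case: i_edge => [|i_edge]; first lia.
  by apply/eqP; rewrite eqn_leq le_pi leqNgt; apply/negP => lt_pi; rewrite ifF in i_edge; lia.
by case: j_edge => [//|]; rewrite ifF ?bc //; lia.
Qed.

Fixpoint block_start (s : nat -> bool) (c : bool) (n : nat) : nat :=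
  if n is m.+1 then (if s m == c then block_start s c m else n) else 0.

Lemma block_start_le s c n : block_start s c n <= n.
Proof. by elim: n => //= n IH; case: ifP => // _; exact: leqW. Qed.

Lemma block_start_const s c n d : block_start s c n <= d < n -> s d = c.
Proof.
elim: n => [|n IH] /=; first lia.
case: ifP => [/eqP sn | _] d_in; last lia.
by have [->|ne_dn] := eqVneq d n; last by apply: IH; have := block_start_le s c n; lia.
Qed.

Lemma block_start_edge s c n : block_start s c n = 0 \/ s (block_start s c n).-1 != c.
Proof. by elim: n => [|n IH] /=; [left | case: ifP => // /negbT; right]. Qed.

Section Rows.
Variables lw uw lo uo : nat.

(* Periods are never empty, so [maxn l 1] is the effective lower bound on their lengths. *)
Definition len_lb (b : bool) := maxn (if b then lw else lo) 1.
Definition len_ub (b : bool) := if b then uw else uo.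

Definition periods_ok D (s : nat -> bool) :=
  forall b i j, is_period D s b i j -> len_lb b <= j - i <= len_ub b.

(* [profile b a o W O]: some row whose period lengths respect the bounds consists of
   [a] work periods totalling [W] days and [o] off periods totalling [O] days, and
   its last period (if any) has type [b]. *)
Inductive profile : bool -> nat -> nat -> nat -> nat -> Prop :=
| profile_nil b : profile b 0 0 0 0
| profile_snoc c a o W O L : profile (~~ c) a o W O -> len_lb c <= L <= len_ub c ->
    profile c (a + c) (o + ~~ c) (W + L * c) (O + L * ~~ c).

Definition splittable a o W O :=
  (a * len_lb true <= W <= a * len_ub true) && (o * len_lb false <= O <= o * len_ub false).

Lemma profile_bounds b a o W O : profile b a o W O ->
  splittable a o W O /\ (if b then o <= a <= o.+1 else a <= o <= a.+1).
Proof.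
rewrite /splittable; elim=> [[] | [] {}a {}o {}W {}O L _ IH LP] //; move: IH LP;
  rewrite /= /len_ub !mulnDl ?mul1n ?mul0n; lia.
Qed.

Lemma profile_of_bounds b a o W O : (if b then o <= a <= o.+1 else a <= o <= a.+1) ->
  splittable a o W O -> profile b a o W O.
Proof.
move Em: (a + o) => m; elim/ltn_ind: m b a o W O Em => m IH b a o W O Em alt /andP[Wb Ob].
have [[a0 o0]|ao_gt0] : (a = 0 /\ o = 0) \/ 0 < m by lia.
  have [-> ->] : W = 0 /\ O = 0 by move: Wb Ob; rewrite a0 o0 !mul0n; lia.
  by rewrite a0 o0; exact: profile_nil.
case: b alt => alt.
- have [a' ea] : exists a', a = a'.+1 by exists a.-1; lia.
  rewrite ea in Wb *; have [W1 [L [-> W1b Lb]]] := split_last_summand Wb.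
  have := @profile_snoc true a' o W1 O L; rewrite /= addn1 addn0 muln1 muln0 addn0.
  by apply=> //; apply: (IH (a' + o)); rewrite /splittable ?W1b ?Ob //; lia.
- have [o' eo] : exists o', o = o'.+1 by exists o.-1; lia.
  rewrite eo in Ob *; have [O1 [L [-> O1b Lb]]] := split_last_summand Ob.
  have := @profile_snoc false a o' W O1 L; rewrite /= addn1 addn0 muln1 muln0 addn0.
  by apply=> //; apply: (IH (a + o')); rewrite /splittable ?O1b ?Wb //; lia.
Qed.

Lemma periods_ok_extend_row s p c L : (p = 0 \/ s p.-1 = ~~ c) ->
  len_lb c <= L <= len_ub c -> periods_ok p s -> periods_ok (p + L) (extend_row s p c).
Proof.
move=> p_edge Lb ok b i j /is_period_extend_row[] //; first by rewrite /len_lb in Lb; lia.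
  exact: ok.
by case=> -> -> ->; rewrite addKn.
Qed.

Lemma row_of_profile b a o W O : profile b a o W O ->
  exists s, [/\ W + O = 0 \/ s (W + O).-1 = b, periods_ok (W + O) s,
                \sum_(d < W + O) s d = W & \sum_(d < W + O) ~~ s d = O].
Proof.
elim=> [{}b | c {}a {}o {}W {}O L _ [s [s_edge ok sW sO]] Lb].
  exists (fun=> b); split; [by left | | by rewrite big_ord0 ..].
  by move=> ? i j [/andP[? ?]]; lia.
have L_gt0 : 0 < L by move: Lb; rewrite /len_lb; lia.
have -> : W + L * c + (O + L * ~~ c) = W + O + L by case: (c); lia.
exists (extend_row s (W + O) c); split.
- by right; rewrite /extend_row ifF //; lia.
- exact: periods_ok_extend_row.
- by rewrite (sum_extend_row (fun x : bool => x : nat)) sW.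
- by rewrite (sum_extend_row (fun x => ~~ x : nat)) sO.
Qed.

Lemma profile_of_row D s : periods_ok D s -> forall p, p <= D ->
    (p = 0 \/ p = D \/ s p != s p.-1) ->
  exists a o, profile (s p.-1) a o (\sum_(d < p) s d) (\sum_(d < p) ~~ s d).
Proof.
move=> ok; elim/ltn_ind => p IH le_pD p_edge.
have [->|p_gt0] := posnP p; first by exists 0, 0; rewrite !big_ord0; exact: profile_nil.
set c := s p.-1; set i := block_start s c p.
have lt_ip : i < p.
  by rewrite /i -(prednK p_gt0) /= eqxx; have := block_start_le s c p.-1; lia.
have const d : i <= d < p -> s d = c by exact: block_start_const.
have period : is_period D s c i p.
  split=> //; first by rewrite lt_ip le_pD.
    by case: (block_start_edge s c p) => [|/eqP]; [left | right].
  by case: p_edge => [|[|/eqP]]; [lia | left | right].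
have [a [o prev]] : exists a o, profile (~~ c) a o (\sum_(d < i) s d) (\sum_(d < i) ~~ s d).
  have [->|i_gt0] := posnP i; first by exists 0, 0; rewrite !big_ord0; exact: profile_nil.
  have si : s i = c by apply: const; rewrite leqnn lt_ip.
  have si' : s i.-1 = ~~ c.
    by case: (block_start_edge s c p); rewrite -/i; [lia | case: (s i.-1); case: (c)].
  rewrite -si'; apply: IH; [exact: lt_ip | lia | by right; right; rewrite si si'; case: (c)].
exists (a + c), (o + ~~ c).
rewrite (@sum_const_suffix (fun d => s d : nat) i p c (ltnW lt_ip)); last first.
  by move=> d /const ->.
rewrite (@sum_const_suffix (fun d => ~~ s d : nat) i p (~~ c) (ltnW lt_ip)); last first.
  by move=> d /const ->.
exact: profile_snoc prev (ok _ _ _ period).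
Qed.

Lemma profile_exists_iff W O : (exists b a o, profile b a o W O) <->
  exists m, [\/ splittable m m W O, splittable m.+1 m W O | splittable m m.+1 W O].
Proof.
split=> [[b [a [o /profile_bounds[fit alt]]]] | [m []] fit].
- have [ea|[ea|eo]] : a = o \/ a = o.+1 \/ o = a.+1 by case: b alt; lia.
  + by subst a; exists o; constructor 1.
  + by subst a; exists o; constructor 2.
  + by subst o; exists a; constructor 3.
- by exists true, m, m; apply: (profile_of_bounds _ fit); rewrite /= leqnn ?leqnSn.
- by exists true, m.+1, m; apply: (profile_of_bounds _ fit); rewrite /= leqnn ?leqnSn.
- by exists false, m, m.+1; apply: (profile_of_bounds _ fit); rewrite /= leqnn ?leqnSn.
Qed.

(* Truncated subtractions add up to zero exactly when the nine linear inequalities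
   characterising the solvability of the box constraints all hold. *)
Definition box_defect D Uw Uo xl xh pl ph :=
  (xl - xh) + (xl - Uw) + (pl - ph) + (pl - Uo) + (xl + pl - D)
  + (D - (xh + ph)) + (D - (xh + Uo)) + (D - (Uw + ph)) + (D - (Uw + Uo)).

Lemma box_defect_eq0 D Uw Uo xl xh pl ph : box_defect D Uw Uo xl xh pl ph = 0 <->
  exists W O, [/\ W + O = D, xl <= W <= minn xh Uw & pl <= O <= minn ph Uo].
Proof.
rewrite /box_defect; split=> [/eqP | [W [O [<- W_in O_in]]]].
  rewrite !addn_eq0 !subn_eq0 => ineqs.
  by exists (maxn xl (D - minn ph Uo)), (D - maxn xl (D - minn ph Uo)); split; lia.
by apply/eqP; rewrite !addn_eq0 !subn_eq0; lia.
Qed.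

Definition box_test D Uw Uo a o :=
  1 - box_defect D Uw Uo (a * len_lb true) (a * len_ub true) (o * len_lb false) (o * len_ub false).

Lemma box_test_neq0 D Uw Uo a o : box_test D Uw Uo a o != 0 <->
  exists W O, [/\ W + O = D, W <= Uw, O <= Uo & splittable a o W O].
Proof.
have one_sub_neq0 n : 1 - n != 0 <-> n = 0 by case: n => [|[]].
rewrite /box_test one_sub_neq0 box_defect_eq0 /splittable.
split=> [[W [O [WO W_in O_in]]] | [W [O [WO WU OU fit]]]]; exists W, O.
  by move: W_in O_in; rewrite !leq_min; split=> //; lia.
by move: fit; rewrite !leq_min; split=> //; lia.
Qed.

Definition fits D Uw Uo m := box_test D Uw Uo m m + box_test D Uw Uo m.+1 m + box_test D Uw Uo m m.+1.

Lemma profile_iff_fits D Uw Uo :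
  (exists W O, [/\ W + O = D, W <= Uw, O <= Uo & exists b a o, profile b a o W O]) <->
  0 < \sum_(m < D.+1) fits D Uw Uo m.
Proof.
split=> [[W [O [WO WU OU /profile_exists_iff[m fit]]]] | ].
  have le_mD : m < D.+1.
    have : m <= m * len_lb true by rewrite leq_pmulr // /len_lb; lia.
    by case: fit; rewrite /splittable ?mulSn; lia.
  have box_ok a o : splittable a o W O -> 0 < box_test D Uw Uo a o.
    by move=> fit_ao; rewrite lt0n; apply/box_test_neq0; exists W, O.
  rewrite (bigD1 (Ordinal le_mD)) //= /fits.
  by case: fit => /box_ok; lia.
rewrite lt0n sum_nat_eq0 => /forallPn[m]; rewrite -lt0n /fits !addn_gt0.
move=> /orP[/orP[]|]; rewrite lt0n => /box_test_neq0[W [O [WO WU OU fit]]].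
all: exists W, O; split=> //; apply/profile_exists_iff; exists m.
- by constructor 1.
- by constructor 2.
- by constructor 3.
Qed.

End Rows.

Lemma feasible_iff_row D N lw uw lo uo Uw Uo : 0 < N ->
  dodosp_feasible D N lw uw lo uo Uw Uo (fun=> 0) (fun=> N) <->
  exists s, [/\ periods_ok lw uw lo uo D s, \sum_(d < D) s d <= Uw & \sum_(d < D) ~~ s d <= Uo].
Proof.
move=> N_gt0; split=> [[f [_ work off Uw_ok Uo_ok]] | [s [ok sUw sUo]]].
  exists (f 0); split; [|exact: Uw_ok | exact: Uo_ok].
  move=> [] i j per; have := per; case=> /andP[lt_ij _] _ _ _; rewrite /len_lb /len_ub.
    by have := work 0 i j N_gt0 per; lia.
  by have := off 0 i j N_gt0 per; lia.
exists (fun=> s); split=> // [d _|n i j _ per|n i j _ per].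
- by rewrite /= -[X in _ <= X]card_ord -sum1_card leq_sum // => n _; exact: leq_b1.
- by have := ok true i j per; rewrite /len_lb /len_ub; lia.
- by have := ok false i j per; rewrite /len_lb /len_ub; lia.
Qed.

Lemma row_iff_profile lw uw lo uo D Uw Uo :
  (exists s, [/\ periods_ok lw uw lo uo D s, \sum_(d < D) s d <= Uw & \sum_(d < D) ~~ s d <= Uo])
  <-> exists W O, [/\ W + O = D, W <= Uw, O <= Uo & exists b a o, profile lw uw lo uo b a o W O].
Proof.
split=> [[s [ok sUw sUo]] | [W [O [<- WU OU [b [a [o pr]]]]]]].
  exists (\sum_(d < D) s d), (\sum_(d < D) ~~ s d); split=> //.
    rewrite -big_split /= -[RHS]card_ord -sum1_card.
    by apply: eq_bigr => d _; case: (s d).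
  have [a [o pr]] := profile_of_row ok (leqnn D) (or_intror (or_introl erefl)).
  by exists (s D.-1), a, o.
by have [s [_ ok sW sO]] := row_of_profile pr; exists s; rewrite sW sO.
Qed.

Fixpoint run (P : program) (n : nat) (c : config) : option config :=
  if n is m.+1 then (if step P c is Some c' then run P m c' else None) else Some c.

Lemma exec_run P n t c c' : run P n c = Some c' -> exec P (n + t) c = exec P t c'.
Proof.
elim: n c => [|n IH] c /=; first by case=> ->.
by case: (step P c) => [c1|] //; exact: IH.
Qed.

Lemma exec_step P t c c' : step P c = Some c' -> exec P t.+1 c = exec P t c'.
Proof. by rewrite /= => ->. Qed.

Lemma exec_monotone P t u c c' : exec P t c = Some c' -> t <= u -> exec P u c = Some c'.
Proof.
elim: t u c => [|t IH] [|u] c /=; case: (step P c) => [c1|] // halts le_tu.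
exact: IH.
Qed.

Definition box_check xl xh pl ph : seq instr := [::
  ISub 22 xl xh;
  ISub 21 xl 6; IAdd 22 22 21;
  ISub 21 pl ph; IAdd 22 22 21;
  ISub 21 pl 7; IAdd 22 22 21;
  IAdd 23 xl pl; ISub 21 23 0; IAdd 22 22 21;
  IAdd 23 xh ph; ISub 21 0 23; IAdd 22 22 21;
  IAdd 23 xh 7; ISub 21 0 23; IAdd 22 22 21;
  IAdd 23 6 ph; ISub 21 0 23; IAdd 22 22 21;
  IAdd 23 6 7; ISub 21 0 23; IAdd 22 22 21;
  ISub 21 8 22; IAdd 16 16 21].

(* At the loop head (pc 11) registers 0-16 hold [loop_regs m] below; registers 17-20
   receive the bounds for m+1 and 21-24 are scratch.  [IConst 24 0; IJle 24 24 11]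
   is an unconditional jump back to the head. *)
Definition decider : program :=
  [:: IConst 8 1; ISub 9 8 2; IAdd 9 2 9; ISub 10 8 4; IAdd 10 4 10;
      IConst 11 0; IConst 12 0; IConst 13 0; IConst 14 0; IConst 15 0; IConst 16 0;
      IJle 11 0 14; IAdd 0 16 16; IHalt;
      IAdd 17 12 9; IAdd 18 13 3; IAdd 19 14 10; IAdd 20 15 5]
  ++ box_check 12 13 14 15 ++ box_check 17 18 14 15 ++ box_check 12 13 19 20 ++
  [:: IAdd 12 12 9; IAdd 13 13 3; IAdd 14 14 10; IAdd 15 15 5; IAdd 11 11 8;
      IConst 24 0; IJle 24 24 11].

Definition body_effect (R : nat -> nat) (r : nat) : nat :=
  let test xl xh pl ph := R 8 - box_defect (R 0) (R 6) (R 7) xl xh pl ph in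
  match r with
  | 11 => R 11 + R 8
  | 12 => R 12 + R 9
  | 13 => R 13 + R 3
  | 14 => R 14 + R 10
  | 15 => R 15 + R 5
  | 16 => R 16 + test (R 12) (R 13) (R 14) (R 15)
          + test (R 12 + R 9) (R 13 + R 3) (R 14) (R 15)
          + test (R 12) (R 13) (R 14 + R 10) (R 15 + R 5)
  | _ => R r
  end.

(* The body only branches on the constant register 24, so it can be run on an
   abstract register file. *)
Lemma decider_body R : exists R', run decider 83 (Config 14 R) = Some (Config 11 R') /\
  forall r, r <= 16 -> R' r = body_effect R r.
Proof.
let c := eval vm_compute in (run decider 83 (Config 14 R)) in
match c with Some (Config 11 ?R') => exists R' end.
by split; [vm_compute | do 17 case=> [//|]].
Qed.

Section Decider.
Variables D N lw uw lo uo Uw Uo : nat.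

Definition loop_regs m r :=
  match r with
  | 0 => D | 1 => N | 2 => lw | 3 => uw | 4 => lo | 5 => uo | 6 => Uw | 7 => Uo | 8 => 1
  | 9 => maxn lw 1 | 10 => maxn lo 1 | 11 => m
  | 12 => m * maxn lw 1 | 13 => m * uw | 14 => m * maxn lo 1 | 15 => m * uo
  | 16 => \sum_(i < m) fits lw uw lo uo D Uw Uo i
  | _ => 0
  end.

Definition loop_inv m (R : nat -> nat) := forall r, r <= 16 -> R r = loop_regs m r.

Lemma decider_init : exists R,
  run decider 11 (init [:: D; N; lw; uw; lo; uo; Uw; Uo]) = Some (Config 11 R) /\ loop_inv 0 R.
Proof.
let c := eval vm_compute in (run decider 11 (init [:: D; N; lw; uw; lo; uo; Uw; Uo])) in
match c with Some (Config 11 ?R) => exists R end.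
have max1 l : l + (1 - l) = maxn l 1 by lia.
split; first by vm_compute.
do 9 case=> [//|].
case=> [_|]; first exact: max1.
case=> [_|]; first exact: max1.
do 5 case=> [//|].
by case=> [_|//]; rewrite /= big_ord0.
Qed.

Lemma body_effect_inv m R : loop_inv m R -> loop_inv m.+1 (body_effect R).
Proof.
move=> inv r le_r16.
do 11 (case: r le_r16 => [|r] le_r16; first exact: inv).
case: r le_r16 => [|[|[|[|[|[|//]]]]]] _; rewrite /= !inv //=.
- exact: addn1.
- by rewrite mulSnr.
- by rewrite mulSnr.
- by rewrite mulSnr.
- by rewrite mulSnr.
rewrite big_ord_recr -!addnA; congr (_ + _).
by rewrite /fits /box_test /len_lb /= !mulSnr addnA.
Qed.

Let total := \sum_(i < D.+1) fits lw uw lo uo D Uw Uo i.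

Lemma decider_loop k m R : loop_inv m R -> m + k = D.+1 ->
  exists cf, exec decider (k * 84 + 2) (Config 11 R) = Some cf /\ regs cf 0 = total + total.
Proof.
elim: k m R => [|k IH] m R inv mk.
  rewrite addn0 in mk; rewrite {}mk in inv.
  have exit : step decider (Config 11 R) = Some (Config 12 R).
    by rewrite /step /= !inv //= ltnn.
  rewrite mul0n add0n (exec_step _ exit).
  by eexists; split; first reflexivity; rewrite /= /upd /= inv.
have enter : step decider (Config 11 R) = Some (Config 14 R).
  by rewrite /step /= !inv //=; have -> : m <= D by lia.
have [R' [body R'_eq]] := decider_body R.
rewrite (_ : k.+1 * 84 + 2 = (83 + (k * 84 + 2)).+1); last lia.
rewrite (exec_step _ enter) (exec_run _ body).
apply: (IH m.+1) => [r le_r16|]; last lia.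
by rewrite (R'_eq r le_r16); exact: (body_effect_inv inv).
Qed.

Lemma decider_exec : exists cf,
  exec decider (84 * D + 97) (init [:: D; N; lw; uw; lo; uo; Uw; Uo]) = Some cf /\
  regs cf 0 = total + total.
Proof.
have [R [start inv]] := decider_init.
have [cf [loop val]] := decider_loop inv (add0n D.+1).
exists cf; split; last exact: val.
rewrite (_ : 84 * D + 97 = 11 + (D.+1 * 84 + 2)); last lia.
by rewrite (exec_run _ start).
Qed.

End Decider.

Theorem lemma3p1 :
  exists (P : program) (c k : nat),
    forall D N lw uw lo uo Uw Uo : nat,
      1 <= D -> 1 <= N ->
      exists cf : config,
        exec P (c * D ^ k + c) (init [:: D; N; lw; uw; lo; uo; Uw; Uo]) = Some cf /\
        (regs cf 0 <> 0 <->
         dodosp_feasible D N lw uw lo uo Uw Uo (fun _ => 0) (fun _ => N)).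
Proof.
exists decider, 97, 1 => D N lw uw lo uo Uw Uo _ N_gt0.
have [cf [halts output]] := decider_exec D N lw uw lo uo Uw Uo.
exists cf; split; first by apply: exec_monotone halts _; rewrite expn1; lia.
rewrite output feasible_iff_row // row_iff_profile profile_iff_fits.
by split; lia.
Qed.
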